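(* Let $N$ be a positive integer. For every integer $n\ge 1$, $$B_{N,n}=n!\sum_{\substack{t_1+2t_2+\cdots+nt_n=n\\ t_1,\dots,t_n\ge 0}}\frac{(t_1+\cdots+t_n)!}{t_1!\cdots t_n!}(-1)^{t_1+\cdots+t_n}\left(\frac{N!}{(N+1)!}\right)^{t_1}\left(\frac{N!}{(N+2)!}\right)^{t_2}\cdots\left(\frac{N!}{(N+n)!}\right)^{t_n},$$ and $$\frac{N!}{(N+n)!}=\det(d_{ij})_{1\le i,j\le n},$$ where $d_{ij}=(-1)^{i-j+1}\dfrac{B_{N,i-j+1}}{(i-j+1)!}$ if $j\le i$, $d_{ij}=1$ if $j=i+1$, and $d_{ij}=0$ if $j>i+1$.
   Context: For a positive integer $N$, the hypergeometric Bernoulli numbers $B_{N,n}$ ($n\ge 0$) are defined by $$\frac{x^N/N!}{e^x-\sum_{n=0}^{N-1}x^n/n!}=\sum_{n=0}^\infty B_{N,n}\frac{x^n}{n!}.$$ *)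

From HB Require Import structures.
From mathcomp Require Import all_boot all_order all_algebra.
Set Implicit Arguments. Unset Strict Implicit. Unset Printing Implicit Defensive.
Import Order.TTheory GRing.Theory Num.Theory.
Local Open Scope ring_scope.

(* Coefficients of the formal power series  e^x - sum_{n<N} x^n/n!  *)
Definition tail_exp_coef (N m : nat) : rat :=
  if (N <= m)%N then (m`!%:R)^-1 else 0.

(* B : nat -> rat is the sequence of hypergeometric Bernoulli numbers B_{N,n}:
   as formal power series,
     x^N/N! = (e^x - sum_{n<N} x^n/n!) * sum_n B n x^n/n!,
   i.e. for every m, comparing the coefficients of x^m. This is exactly the
   defining identity  (x^N/N!)/(e^x - sum_{n<N} x^n/n!) = sum_n B_{N,n} x^n/n!
   (the denominator has nonzero x^N coefficient, and the quotient is a power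
   series; the solution B is unique). *)
Definition is_hyper_bernoulli (N : nat) (B : nat -> rat) : Prop :=
  forall m : nat,
    (if m == N then (N`!%:R)^-1 else 0) =
    \sum_(k < m.+1) tail_exp_coef N (m - k) * (B k / (k`!%:R)).

(* The matrix (d_ij)_{1<=i,j<=n}, with 0-based indices i j : 'I_n. *)
Definition dmat (n : nat) (B : nat -> rat) : 'M[rat]_n :=
  \matrix_(i < n, j < n)
    if (j <= i)%N then
      (-1) ^+ (i - j).+1 * (B (i - j).+1 / ((i - j).+1`!%:R))
    else if j == i.+1 :> nat then 1 else 0.

(* With a_j = N!/(N+j)! and b_k = B_{N,k}/k!, the definition of B_{N,.} says
   that (sum_j a_j x^j) (sum_k b_k x^k) = 1.  Hence b_0 = 1 and
   b_p = - sum_{i=1}^p a_i b_{p-i}, a recursion solved by the sum over the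
   compositions of p of the products of the -a_i; grouping compositions by
   their numbers t_i of parts equal to i gives the multinomial formula.
   The lower triangular Toeplitz matrices of a and b are mutually inverse and
   the second has determinant 1, so a_n is a cofactor of the matrix of b,
   which is (d_ij) up to signs of rows and columns. *)
From mathcomp Require Import all_boot all_order all_algebra.
From mathcomp Require Import ring zify.
Set Implicit Arguments.
Unset Strict Implicit.
Unset Printing Implicit Defensive.

Import Order.TTheory GRing.Theory Num.Theory.
Local Open Scope ring_scope.

Lemma natr_fact_neq0 (R : numDomainType) (k : nat) : (k`!%:R : R) != 0.
Proof. by rewrite pnatr_eq0 -lt0n fact_gt0. Qed.

Lemma sum_ord_window (V : nmodType) (F : nat -> V) (m j i : nat) :
  (j <= i < m)%N -> (forall k, (k < j)%N || (i < k)%N -> F k = 0) ->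
  \sum_(k < m) F k = \sum_(l < (i - j).+1) F (l + j)%N.
Proof.
move=> /andP[le_ji lt_im] F0.
rewrite -(big_mkord xpredT) (big_cat_nat (leq0n j)) /=; last by lia.
rewrite (big_cat_nat (_ : j <= i.+1)%N lt_im) //=; last by lia.
rewrite big1_seq => [|k]; last first.
  by rewrite mem_index_iota => /andP[_ /andP[_ lt_kj]]; apply: F0; rewrite lt_kj.
rewrite [\sum_(i.+1 <= k < m) F k]big1_seq => [|k]; last first.
  by rewrite mem_index_iota => /andP[_ /andP[lt_ik _]]; apply: F0; rewrite lt_ik orbT.
rewrite add0r addr0 -{1}(add0n j) big_addn big_mkord.
by rewrite (_ : i.+1 - j = (i - j).+1)%N //; lia.
Qed.

Section LowerToeplitz.

Variable R : comPzRingType.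

Definition toeplitz n (c : nat -> R) : 'M[R]_n :=
  \matrix_(i < n, j < n) if (j <= i)%N then c (i - j)%N else 0.

Definition convolution (a b : nat -> R) (p : nat) : R :=
  \sum_(k < p.+1) a (p - k)%N * b k.

Lemma mul_toeplitz n (a b : nat -> R) :
  toeplitz n a *m toeplitz n b = toeplitz n (convolution a b).
Proof.
apply/matrixP => i j; rewrite !mxE.
set F := fun k : nat =>
  (if (k <= i)%N then a (i - k)%N else 0) * (if (j <= k)%N then b (k - j)%N else 0).
rewrite (eq_bigr (F \o val)); last by move=> k _; rewrite !mxE.
case: (leqP (j : nat) i) => [le_ji|lt_ij]; last first.
  by apply: big1 => k _; rewrite /F /=; do 2 case: leqP => ?; rewrite ?mulr0 ?mul0r //; lia.
rewrite (@sum_ord_window _ F _ j i) ?le_ji ?ltn_ord //; last first.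
  by move=> k /orP[] ?; rewrite /F; do 2 case: leqP => ?; rewrite ?mulr0 ?mul0r //; lia.
apply: eq_bigr => l _; have lt_l := ltn_ord l.
by rewrite /F ifT ?leq_addl ?addnK ?subnDA 1?subnAC //; lia.
Qed.

Lemma toeplitz_delta n (c : nat -> R) :
  (forall p, c p = (p == 0)%:R) -> toeplitz n c = 1%:M.
Proof.
move=> c_delta; apply/matrixP => i j; rewrite !mxE c_delta -(inj_eq val_inj) /=.
case: leqP => [le_ji|lt_ij]; last by rewrite ltn_eqF.
by rewrite subn_eq0 eqn_leq le_ji andbT.
Qed.

Lemma det_toeplitz n (b : nat -> R) : \det (toeplitz n b) = b 0%N ^+ n.
Proof.
rewrite det_trig; last by apply/is_trig_mxP => i j lt_ij; rewrite mxE leqNgt lt_ij.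
by rewrite (eq_bigr (fun=> b 0%N)) ?prodr_const ?card_ord // => i _; rewrite mxE leqnn subnn.
Qed.

Section ConvolutionInverse.

Variables a b : nat -> R.
Hypothesis a0 : a 0%N = 1.
Hypothesis conv_ab : forall p, convolution a b p = (p == 0)%:R.

Lemma convolution_inv0 : b 0%N = 1.
Proof. by have := conv_ab 0; rewrite /convolution big_ord1 a0 mul1r. Qed.

Lemma convolution_inv_rec p : (0 < p)%N ->
  b p = \sum_(i < p) - a i.+1 * b (p - i.+1)%N.
Proof.
move=> p_gt0; have := conv_ab p; rewrite /convolution big_ord_recr /= subnn a0 mul1r.
rewrite gtn_eqF // => /addr0_eq <-; rewrite -sumrN (reindex_inj rev_ord_inj) /=.
apply: eq_bigr => i _; rewrite mulNr; congr (- (a _ * _)).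
by have := ltn_ord i; lia.
Qed.

Lemma toeplitz_inv_coef n :
  a n = (-1) ^+ n * \det (row' ord0 (col' ord_max (toeplitz n.+1 b))).
Proof.
have mul_ab : toeplitz n.+1 a *m toeplitz n.+1 b = 1%:M.
  by rewrite mul_toeplitz toeplitz_delta.
have det_b : \det (toeplitz n.+1 b) = 1.
  by rewrite det_toeplitz convolution_inv0 expr1n.
have adj_b : \adj (toeplitz n.+1 b) = toeplitz n.+1 a.
  by rewrite -[RHS]mulmx1 -det_b -mul_mx_adj mulmxA mul_ab mul1mx.
have := congr1 (fun M : 'M_n.+1 => M ord_max ord0) adj_b.
by rewrite /= !mxE /cofactor subn0 add0n /= => <-.
Qed.

End ConvolutionInverse.

End LowerToeplitz.

Section Compositions.

Variables (R : numFieldType) (x : nat -> R) (n : nat).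

Local Notation mult := {ffun 'I_n -> 'I_n.+1}.
Implicit Types (t : mult) (i j : 'I_n).

Definition weight (t : mult) : nat := \sum_(i < n) i.+1 * t i.
Definition nparts (t : mult) : nat := \sum_(i < n) t i.
Definition multinom (t : mult) : R := (nparts t)`!%:R / (\prod_(i < n) (t i)`!)%:R.
Definition monom (t : mult) : R := \prod_(i < n) x i.+1 ^+ t i.

(* The sum over the compositions of m with parts at most n of the products of
   the x_part; a multiplicity vector t groups multinom t compositions. *)
Definition composition_sum (m : nat) : R :=
  \sum_(t : mult | weight t == m) multinom t * monom t.

(* incr_at saturates to 0 when t i = n; the weight bound keeps such t out of
   the way in incr_at_preimage. *)
Definition incr_at (i : 'I_n) (t : mult) : mult :=
  [ffun j => if j == i then inord (t j).+1 else t j].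
Definition decr_at (i : 'I_n) (t : mult) : mult :=
  [ffun j => if j == i then inord (t j).-1 else t j].

Lemma decr_at_eq i t : decr_at i t i = (t i).-1 :> nat.
Proof. by rewrite ffunE eqxx inordK // (leq_ltn_trans (leq_pred _)). Qed.

Lemma decr_at_neq i j t : j != i -> decr_at i t j = t j.
Proof. by rewrite ffunE => /negPf ->. Qed.

Lemma incr_at_eq i t : (t i < n)%N -> incr_at i t i = (t i).+1 :> nat.
Proof. by move=> lt_tn; rewrite ffunE eqxx inordK. Qed.

Lemma incr_at_neq i j t : j != i -> incr_at i t j = t j.
Proof. by rewrite ffunE => /negPf ->. Qed.

Lemma incr_atK i t : (t i < n)%N -> decr_at i (incr_at i t) = t.
Proof.
move=> lt_tn; apply/ffunP => j; case: (eqVneq j i) => [->|ne_ji].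
  by apply: val_inj; rewrite /= decr_at_eq incr_at_eq.
by rewrite decr_at_neq // incr_at_neq.
Qed.

Lemma decr_atK i t : (0 < t i)%N -> incr_at i (decr_at i t) = t.
Proof.
move=> t_gt0; apply/ffunP => j; case: (eqVneq j i) => [->|ne_ji]; last first.
  by rewrite incr_at_neq // decr_at_neq.
apply: val_inj; rewrite /= incr_at_eq decr_at_eq ?prednK //.
have := ltn_ord (t i); lia.
Qed.

Lemma nparts_decr_at i t : (0 < t i)%N -> nparts t = (nparts (decr_at i t)).+1.
Proof.
move=> t_gt0; rewrite /nparts (bigD1 i) //= [in RHS](bigD1 i) //= decr_at_eq.
rewrite -addSn prednK //; congr (_ + _)%N.
by apply: eq_bigr => j /decr_at_neq ->.
Qed.

Lemma prod_fact_decr_at i t : (0 < t i)%N ->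
  (\prod_(j < n) (t j)`! = t i * \prod_(j < n) (decr_at i t j)`!)%N.
Proof.
move=> t_gt0; rewrite (bigD1 i) //= [in RHS](bigD1 i) //= decr_at_eq mulnA.
rewrite -{1}(prednK t_gt0) factS prednK //; congr (_ * _)%N.
by apply: eq_bigr => j /decr_at_neq ->.
Qed.

Lemma monom_decr_at i t : (0 < t i)%N -> monom t = x i.+1 * monom (decr_at i t).
Proof.
move=> t_gt0; rewrite /monom (bigD1 i) //= [in RHS](bigD1 i) //= decr_at_eq.
rewrite mulrA -exprS prednK //; congr (_ * _).
by apply: eq_bigr => j /decr_at_neq ->.
Qed.

Lemma weight_incr_at i t : (t i < n)%N -> weight (incr_at i t) = (weight t + i.+1)%N.
Proof.
move=> lt_tn; rewrite /weight (bigD1 i) //= [in RHS](bigD1 i) //= incr_at_eq //.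
rewrite (eq_bigr (fun j : 'I_n => j.+1 * t j)%N) => [|j /incr_at_neq -> //]; lia.
Qed.

Lemma weight_ge i t : (i.+1 * t i <= weight t)%N.
Proof. by rewrite /weight (bigD1 i) //= leq_addr. Qed.

Lemma nparts_gt0 t : (0 < weight t)%N -> (0 < nparts t)%N.
Proof.
rewrite !lt0n; apply: contra; rewrite !sum_nat_eq0 => /forall_inP t0.
by apply/forall_inP => i _; rewrite (eqP (t0 i isT)) muln0.
Qed.

Lemma multinom_pascal t : (0 < nparts t)%N ->
  multinom t = \sum_(i < n | (0 < t i)%N) multinom (decr_at i t).
Proof.
move=> nparts_gt0.
have fact_prod_neq0 (s : mult) : ((\prod_(j < n) (s j)`!)%:R : R) != 0.
  by rewrite pnatr_eq0 -lt0n prodn_gt0 // => j; rewrite fact_gt0.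
have multinom_decr i : (0 < t i)%N ->
    multinom (decr_at i t) = (nparts t).-1`!%:R / (\prod_(j < n) (t j)`!)%:R * (t i)%:R.
  move=> t_gt0; rewrite /multinom (prod_fact_decr_at t_gt0) (nparts_decr_at t_gt0) /= natrM.
  by field; rewrite fact_prod_neq0 pnatr_eq0 -lt0n t_gt0.
have nparts_supp : nparts t = (\sum_(i < n | (0 < t i)%N) t i)%N.
  rewrite /nparts (bigID (fun i => 0 < t i)%N) /= [X in (_ + X)%N]big1 ?addn0 //.
  by move=> i; rewrite lt0n negbK => /eqP.
rewrite (eq_bigr _ multinom_decr) -big_distrr /= -natr_sum -nparts_supp.
rewrite /multinom mulrAC -natrM mulnC.
by case: (nparts t) nparts_gt0 => // k _; rewrite factS.
Qed.

Lemma incr_at_preimage m i s : (0 < m <= n)%N ->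
  [&& weight (incr_at i s) == m & 0 < incr_at i s i]%N && (decr_at i (incr_at i s) == s)
  = (i < m)%N && (weight s == m - i.+1)%N.
Proof.
move=> /andP[m_gt0 le_mn]; case: (ltnP (s i) n) => [lt_sn|ge_sn].
  rewrite incr_atK // eqxx weight_incr_at // incr_at_eq // ltn0Sn !andbT.
  by apply/eqP/andP => [?|[? /eqP ?]]; [split; [|apply/eqP] | ]; lia.
have s_n : s i = n :> nat by have := ltn_ord (s i); lia.
have -> : (decr_at i (incr_at i s) == s) = false.
  apply/negbTE/eqP => /(congr1 (fun t : mult => nat_of_ord (t i))).
  by rewrite /= decr_at_eq ffunE eqxx /inord val_insubd s_n ltnn /=; lia.
have := weight_ge i s; rewrite s_n !andbF => le_w.
by case: ltnP => //= lt_im; apply/esym/eqP; nia.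
Qed.

Lemma composition_sum0 : composition_sum 0 = 1.
Proof.
pose t0 : mult := [ffun=> ord0].
rewrite /composition_sum (big_pred1 t0) => [|t].
  by rewrite /multinom /monom /nparts !big1 ?divr1 ?mul1r // => i _; rewrite ffunE.
rewrite /= /weight sum_nat_eq0; apply/forall_inP/eqP => [t0s|-> i _]; last by rewrite ffunE muln0.
apply/ffunP => i; apply: val_inj; rewrite ffunE /=.
by have := t0s i isT; rewrite muln_eq0 => /eqP.
Qed.

Lemma composition_sum_rec m : (0 < m <= n)%N ->
  composition_sum m = \sum_(i < m) x i.+1 * composition_sum (m - i.+1).
Proof.
move=> m_range; have /andP[m_gt0 le_mn] := m_range.
transitivity (\sum_(t : mult | weight t == m) \sum_(i < n | (0 < t i)%N)
    x i.+1 * (multinom (decr_at i t) * monom (decr_at i t))).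
  apply: eq_bigr => t /eqP wt_m.
  rewrite multinom_pascal ?nparts_gt0 ?wt_m // big_distrl /=.
  by apply: eq_bigr => i t_gt0; rewrite (monom_decr_at t_gt0) mulrCA.
rewrite (exchange_big_dep predT) //=.
rewrite (big_ord_widen n (fun k => x k.+1 * composition_sum (m - k.+1)) le_mn).
rewrite [RHS]big_mkcond /=.
apply: eq_bigr => i _; rewrite -big_distrr /=.
rewrite (reindex_onto (incr_at i) (decr_at i)) /=; last by move=> t /andP[_ /decr_atK].
case: ifP => lt_im; last by rewrite big_pred0 ?mulr0 // => s; rewrite incr_at_preimage ?lt_im.
congr (_ * _); apply: eq_big => [s|s /andP[_ /eqP -> //]].
by rewrite incr_at_preimage ?lt_im.
Qed.

Lemma composition_sum_unique (b : nat -> R) : b 0%N = 1 ->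
    (forall p, (0 < p <= n)%N -> b p = \sum_(i < p) x i.+1 * b (p - i.+1)%N) ->
  forall m, (m <= n)%N -> b m = composition_sum m.
Proof.
move=> b0 b_rec; elim/ltn_ind => m IHm le_mn.
have [->|m_gt0] := posnP m; first by rewrite b0 composition_sum0.
rewrite b_rec ?m_gt0 // composition_sum_rec ?m_gt0 //.
by apply: eq_bigr => i _; rewrite IHm //; lia.
Qed.

End Compositions.

(* N! times the coefficient of x^(N+j) in e^x - sum_(n<N) x^n/n!. *)
Definition tail_coef (N j : nat) : rat := N`!%:R / (N + j)`!%:R.

Definition bern_coef (B : nat -> rat) (k : nat) : rat := B k / k`!%:R.

Lemma tail_coef0 N : tail_coef N 0 = 1.
Proof. by rewrite /tail_coef addn0 divff ?natr_fact_neq0. Qed.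

Lemma hyper_bernoulli_convolution N B : is_hyper_bernoulli N B ->
  forall p, convolution (tail_coef N) (bern_coef B) p = (p == 0)%:R.
Proof.
move=> hB p; have := hB (N + p)%N; rewrite -[X in _ == X]addn0 eqn_add2l.
have -> : (p == 0)%:R = N`!%:R * (if p == 0%N then (N`!%:R)^-1 else 0 : rat).
  by case: eqP; rewrite ?mulr0 ?divff ?natr_fact_neq0.
move=> ->; rewrite big_distrr /= /convolution.
rewrite (big_ord_widen (N + p).+1 (fun k => tail_coef N (p - k) * bern_coef B k));
  last by rewrite ltnS leq_addl.
rewrite big_mkcond; apply: eq_bigr => k _; rewrite /tail_exp_coef /tail_coef /bern_coef.
have le_kNp := ltn_ord k; case: ltnP => [le_kp|lt_pk].
  by rewrite ifT ?addnBA ?mulrA //; lia.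
by rewrite ifF ?mul0r ?mulr0 //; lia.
Qed.

Lemma dmat_toeplitz_minor n B : B 0%N = 1 ->
  dmat n B = diag_mx (\row_(i < n) (-1) ^+ i)
             *m row' ord0 (col' ord_max (toeplitz n.+1 (bern_coef B)))
             *m diag_mx (\row_(j < n) - (-1) ^+ j).
Proof.
move=> B0; apply/matrixP => i j; rewrite mul_mx_diag mul_diag_mx !mxE lift0 lift_max /=.
case: (leqP (j : nat) i) => [le_ji|lt_ij].
  rewrite ifT; last by lia.
  rewrite (_ : i.+1 - j = (i - j).+1)%N; last by lia.
  have -> : (-1) ^+ i = (-1) ^+ (i - j) * (-1) ^+ j :> rat by rewrite -exprD subnK.
  rewrite /bern_coef exprS; set b := B _ / _.
  transitivity (- ((-1) ^+ (i - j) * b) * ((-1) ^+ j * (-1) ^+ j)); last by ring.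
  by rewrite -expr2 sqrr_sign; ring.
have [->|ne_ji] := eqVneq (j : nat) i.+1.
  rewrite ltnSn subnn /bern_coef B0 fact0 divr1 exprS.
  by rewrite mulN1r opprK -expr2 sqrr_sign.
by rewrite ifN ?ifF ?mulr0 ?mul0r //; lia.
Qed.

Lemma det_dmat n B : B 0%N = 1 ->
  \det (dmat n B) = (-1) ^+ n * \det (row' ord0 (col' ord_max (toeplitz n.+1 (bern_coef B)))).
Proof.
move=> B0; rewrite dmat_toeplitz_minor // !det_mulmx !det_diag mulrC mulrA -big_split /=.
rewrite (eq_bigr (fun=> -1)) ?prodr_const ?card_ord // => i _.
by rewrite !mxE mulNr -expr2 sqrr_sign.
Qed.

Theorem corollary2 (N : nat) (B : nat -> rat) :
  (0 < N)%N -> is_hyper_bernoulli N B ->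
  forall n : nat, (0 < n)%N ->
    B n =
      n`!%:R *
      \sum_(t : {ffun 'I_n -> 'I_n.+1} |
              (\sum_(i < n) (i.+1 * t i)%N)%N == n)
        ((\sum_(i < n) (t i : nat))%N`!%:R / (\prod_(i < n) (t i)`!)%N%:R *
         (-1) ^+ (\sum_(i < n) (t i : nat))%N *
         \prod_(i < n) (N`!%:R / ((N + i.+1)`!)%:R) ^+ t i)
    /\ N`!%:R / ((N + n)`!)%:R = \det (dmat n B).
Proof.
move=> _ hB n _.
have conv_ab := hyper_bernoulli_convolution hB.
have b0 : bern_coef B 0 = 1 := convolution_inv0 (tail_coef0 N) conv_ab.
have B0 : B 0%N = 1 by move: b0; rewrite /bern_coef fact0 divr1.
split; last by rewrite det_dmat // -(toeplitz_inv_coef (tail_coef0 N) conv_ab).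
have -> : B n = n`!%:R * bern_coef B n by rewrite /bern_coef mulrC divfK ?natr_fact_neq0.
rewrite (@composition_sum_unique _ (fun i => - tail_coef N i) n (bern_coef B)) //; last first.
  by move=> p /andP[p_gt0 _]; rewrite (convolution_inv_rec (tail_coef0 N) conv_ab).
congr (_ * _); apply: eq_bigr => t _; rewrite /multinom /monom -mulrA; congr (_ * _).
by under eq_bigr do rewrite exprNn; rewrite big_split /= prodrXr.
Qed.
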